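(* Let $\mathcal{E}$ be the coarse structure on $\omega$ with base $\{E_H: H\subseteq S_\omega \text{ finite}, \mathrm{id}\in H\}$, $E_H=\{(x,y):y\in Hx\}$, where $S_\omega$ is the group of all permutations of $\omega$. Then $so(\omega,\mathcal{E})=so(\omega,\mathfrak{M}_\omega)$ and $\delta_{(\omega,\mathcal{E})}=\delta_{(\omega,\mathfrak{M}_\omega)}$, although $\mathcal{E}\neq\mathfrak{M}_\omega$; both balleans have exactly the finite sets as bounded sets.
   Context: A ballean $(X,\mathcal{E})$ is a set with a coarse structure. $E[x]=\{y:(x,y)\in E\}$, $E[A]=\bigcup_{a\in A}E[a]$. $Y$ is bounded if $Y\subseteq E[x]$ for some $x$ and $E\in\mathcal{E}$. $A\,\delta_{(X,\mathcal{E})}\,B$ means there is $E\in\mathcal{E}$ with $A\subseteq E[B]$ and $B\subseteq E[A]$. A function $f:X\to\mathbb{R}$ is slowly oscillating if for every $E\in\mathcal{E}$ and $\varepsilon>0$ there is a bounded $B$ with $\operatorname{diam} f(E[x])<\varepsilon$ for all $x\in X\setminus B$; $so(X,\mathcal{E})$ denotes the set of bounded slowly oscillating functions. $\mathfrak{M}_\omega$ is the coarse structure on $\omega$ with base $\{M_{\mathcal{P}}\}$, where $\mathcal{P}$ ranges over coverings of $\omega$ by finite sets such that for each $x\in\omega$ the set $\bigcup\{P'\in\mathcal{P}:x\in P'\}$ is finite, and $M_{\mathcal{P}}=\{(x,y):x,y\in P\text{ for some }P\in\mathcal{P}\}$. *)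

From Stdlib Require Import Reals List.
Import ListNotations.
Open Scope R_scope.

Definition rel := nat -> nat -> Prop.

Definition coarse := rel -> Prop.

Definition generated_by (base : rel -> Prop) : coarse :=
  fun E => exists B, base B /\ (forall x y, E x y -> B x y).

Definition ball (E : rel) (x : nat) : nat -> Prop := fun y => E x y.

Definition bounded_set (C : coarse) (Y : nat -> Prop) : Prop :=
  exists E x, C E /\ (forall y, Y y -> ball E x y).

Definition finite_set (Y : nat -> Prop) : Prop :=
  exists l : list nat, forall y, Y y -> In y l.

Definition diam_lt (f : nat -> R) (A : nat -> Prop) (eps : R) : Prop :=
  exists d, d < eps /\ (forall y z, A y -> A z -> Rabs (f y - f z) <= d).

Definition bounded_fun (f : nat -> R) : Prop :=
  exists M, forall x, Rabs (f x) <= M.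

Definition slowly_oscillating (C : coarse) (f : nat -> R) : Prop :=
  forall E eps, C E -> 0 < eps ->
    exists B, bounded_set C B /\ (forall x, ~ B x -> diam_lt f (ball E x) eps).

Definition so (C : coarse) (f : nat -> R) : Prop :=
  bounded_fun f /\ slowly_oscillating C f.

Definition ball_set (E : rel) (A : nat -> Prop) : nat -> Prop :=
  fun y => exists a, A a /\ E a y.

Definition subset (A B : nat -> Prop) : Prop := forall x, A x -> B x.

Definition delta (C : coarse) (A B : nat -> Prop) : Prop :=
  exists E, C E /\ subset A (ball_set E B) /\ subset B (ball_set E A).

Definition is_perm (h : nat -> nat) : Prop :=
  (forall x y, h x = h y -> x = y) /\ (forall y, exists x, h x = y).

Definition E_H (H : list (nat -> nat)) : rel :=
  fun x y => exists h, In h H /\ y = h x.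

Definition perm_base (B : rel) : Prop :=
  exists H : list (nat -> nat),
    (forall h, In h H -> is_perm h) /\ In (fun x : nat => x) H /\
    (forall x y, B x y <-> E_H H x y).

Definition calE : coarse := generated_by perm_base.

(* M_P for a covering P of omega by finite sets (given as lists) *)
Definition M_P (P : list nat -> Prop) : rel :=
  fun x y => exists p, P p /\ In x p /\ In y p.

Definition admissible_cover (P : list nat -> Prop) : Prop :=
  (forall x, exists p, P p /\ In x p) /\
  (forall x, finite_set (fun y => exists p, P p /\ In x p /\ In y p)).

Definition M_base (B : rel) : Prop :=
  exists P, admissible_cover P /\ (forall x y, B x y <-> M_P P x y).

Definition M_omega : coarse := generated_by M_base.

From Stdlib Require Import Reals List Lia Lra Classical ClassicalEpsilon PeanoNat FinFun.
Import ListNotations.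
Local Open Scope nat_scope.

(* Every base entourage E_H of calE lies in M_P for the admissible cover by
   the H-orbits, so calE refines M_omega; conversely M_P is a symmetric
   locally finite graph, which permutations of omega imitate coarsely:
   - in both balleans the bounded sets are the finite ones (balls of E_H are
     orbits of size <= |H|; transpositions through 0 cover a finite set);
   - M_omega-close sets are both finite (matched by finitely many
     transpositions) or both infinite (matched by two involutions moving the
     complement of each set into it), hence calE-close;
   - a calE-slowly oscillating f varies little along M_P-edges outside a
     finite set, else infinitely many disjoint bad edges (a_n, b_n) exist and
     the involution exchanging a_n and b_n is a calE entourage along which f
     does not oscillate slowly;
   - calE <> M_omega: the cover by the intervals [n, 2n] has unbounded balls. *)

(* An involution of omega; these are the only permutations we construct. *)
Definition involution (s : nat -> nat) : Prop := forall x, s (s x) = x.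

Lemma involution_perm s : involution s -> is_perm s.
Proof.
  intro Hs; split.
  - intros x y H. rewrite <- (Hs x), <- (Hs y), H; reflexivity.
  - intros y; exists (s y); apply Hs.
Qed.

Lemma id_perm : is_perm (fun x => x).
Proof. apply involution_perm; intro; reflexivity. Qed.

Definition swap (u v : nat) : nat -> nat :=
  fun x => if Nat.eqb x u then v else if Nat.eqb x v then u else x.

Lemma swap_involution u v : involution (swap u v).
Proof.
  intro x; unfold swap.
  destruct (Nat.eqb_spec x u); destruct (Nat.eqb_spec x v); subst;
  repeat match goal with |- context[Nat.eqb ?a ?b] => destruct (Nat.eqb_spec a b) end;
  subst; congruence.
Qed.

Lemma swap_l u v : swap u v u = v.
Proof. unfold swap; rewrite Nat.eqb_refl; reflexivity. Qed.

Lemma swap_r u v : swap u v v = u.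
Proof.
  unfold swap. destruct (Nat.eqb_spec v u); [subst; reflexivity|].
  rewrite Nat.eqb_refl; reflexivity.
Qed.

Lemma involution_extending (D : nat -> Prop) (t : nat -> nat) :
  (forall x y, D x -> D y -> t x = t y -> x = y) -> (forall x, D x -> ~ D (t x)) ->
  exists s, involution s /\ forall x, D x -> s x = t x.
Proof.
  intros Hinj Hout.
  pose (s := fun x => match excluded_middle_informative (D x) with
    | left _ => t x
    | right _ => match excluded_middle_informative (exists y, D y /\ t y = x) with
       | left e => proj1_sig (constructive_indefinite_description _ e)
       | right _ => x end end).
  assert (Hon : forall x, D x -> s x = t x).
  { intros x Dx; unfold s. destruct (excluded_middle_informative (D x)); tauto. }
  assert (Hback : forall x, D x -> s (t x) = x).
  { intros x Dx; unfold s. destruct (excluded_middle_informative (D (t x))) as [d|_].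
    - exfalso; exact (Hout x Dx d).
    - destruct (excluded_middle_informative _) as [e|e]; [|exfalso; eauto].
      destruct (constructive_indefinite_description _ e) as [y [Dy Ey]]; simpl.
      apply Hinj; auto. }
  exists s; split; [|exact Hon].
  intro x. destruct (classic (D x)) as [Dx|nDx].
  - rewrite (Hon x Dx); apply Hback; exact Dx.
  - destruct (classic (exists y, D y /\ t y = x)) as [[y [Dy <-]]|ne].
    + rewrite (Hback y Dy), (Hon y Dy); reflexivity.
    + assert (Hfix : s x = x).
      { unfold s. destruct (excluded_middle_informative (D x)); [tauto|].
        destruct (excluded_middle_informative _); tauto. }
      rewrite !Hfix; reflexivity.
Qed.

Lemma pairing_involution (a b : nat -> nat) :
  Injective a -> Injective b -> (forall n m, a n <> b m) ->
  exists s, involution s /\ forall n, s (a n) = b n.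
Proof.
  intros Ia Ib Iab.
  pose (t := fun x => match excluded_middle_informative (exists n, a n = x) with
     | left e => b (proj1_sig (constructive_indefinite_description _ e))
     | right _ => x end).
  assert (Ht : forall n, t (a n) = b n).
  { intro n; unfold t. destruct (excluded_middle_informative _) as [e|e]; [|exfalso; eauto].
    destruct (constructive_indefinite_description _ e) as [m Hm]; simpl.
    f_equal; apply Ia; exact Hm. }
  destruct (involution_extending (fun x => exists n, a n = x) t) as [s [Hs Hst]].
  - intros x y [n <-] [m <-]. rewrite !Ht. intro E; apply Ib in E; subst; reflexivity.
  - intros x [n <-] [m Hm]. rewrite Ht in Hm. exact (Iab m n Hm).
  - exists s; split; auto. intro n. rewrite <- Ht. apply Hst; eauto.
Qed.

Lemma fresh_sequence {T : Type} (Q : T -> Prop) (supp : T -> list nat) :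
  (forall L, exists t, Q t /\ forall u, In u (supp t) -> ~ In u L) ->
  exists e : nat -> T, (forall n, Q (e n)) /\
    forall n m u, n <> m -> In u (supp (e n)) -> ~ In u (supp (e m)).
Proof.
  intros Hfresh.
  pose (g := fun L => proj1_sig (constructive_indefinite_description _ (Hfresh L))).
  assert (Hg : forall L, Q (g L) /\ forall u, In u (supp (g L)) -> ~ In u L).
  { intro L; unfold g; destruct (constructive_indefinite_description _ (Hfresh L)); auto. }
  (* hist n collects the supports of the first n objects *)
  pose (hist := nat_rect (fun _ => list nat) [] (fun _ L => supp (g L) ++ L)).
  pose (e := fun n => g (hist n)).
  assert (Hhist : forall k n, k < n -> incl (supp (e k)) (hist n)).
  { intros k n; induction n as [|n IH]; intros Hk; [lia|].
    intros u Hu; simpl; apply in_or_app.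
    destruct (Nat.eq_dec k n) as [->|Hne]; [left; exact Hu|].
    right; apply IH; [lia|exact Hu]. }
  exists e; split; [intro; apply Hg|].
  intros n m u Hnm Hn Hm.
  destruct (Nat.lt_total n m) as [Hlt|[Heq|Hlt]]; [|contradiction|].
  - exact (proj2 (Hg (hist m)) u Hm (Hhist n m Hlt u Hn)).
  - exact (proj2 (Hg (hist n)) u Hn (Hhist m n Hlt u Hm)).
Qed.

Lemma infinite_enumeration (A : nat -> Prop) : ~ finite_set A ->
  exists e : nat -> nat, Injective e /\ forall n, A (e n).
Proof.
  intros Hinf.
  destruct (fresh_sequence A (fun x => [x])) as [e [HA Hdisj]].
  - intro L. apply NNPP; intro Hno; apply Hinf; exists L; intros y Hy.
    apply NNPP; intro HyL; apply Hno; exists y; split; [exact Hy|].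
    intros u [<-|[]]; exact HyL.
  - exists e; split; [|exact HA].
    intros n m Hnm. destruct (Nat.eq_dec n m) as [|Hne]; [assumption|].
    exfalso; apply (Hdisj n m (e n) Hne); [left|rewrite Hnm; left]; reflexivity.
Qed.

Lemma fresh_edges (Q : nat -> nat -> Prop) :
  (forall L, exists x w, Q x w /\ x <> w /\ ~ In x L /\ ~ In w L) ->
  exists a b : nat -> nat, Injective a /\ Injective b /\ (forall n m, a n <> b m) /\
    forall n, Q (a n) (b n).
Proof.
  intros Hfresh.
  destruct (fresh_sequence (fun p => Q (fst p) (snd p) /\ fst p <> snd p)
              (fun p => [fst p; snd p])) as [e [HQ Hdisj]].
  - intro L. destruct (Hfresh L) as [x [w [Hq [Hxw [Hx Hw]]]]].
    exists (x, w); simpl; split; [tauto|]. intros u [<-|[<-|[]]]; assumption.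
  -
    assert (Hsep : forall n m u v, n <> m -> In u [fst (e n); snd (e n)] ->
              In v [fst (e m); snd (e m)] -> u <> v).
    { intros n m u v Hne Hu Hv <-. exact (Hdisj n m u Hne Hu Hv). }
    exists (fun n => fst (e n)), (fun n => snd (e n)).
    repeat split; try (intro n; apply HQ).
    + intros n m Hnm. destruct (Nat.eq_dec n m) as [|Hne]; [assumption|].
      exfalso; apply (Hsep n m _ _ Hne (or_introl eq_refl) (or_introl eq_refl) Hnm).
    + intros n m Hnm. destruct (Nat.eq_dec n m) as [|Hne]; [assumption|].
      exfalso; refine (Hsep n m _ _ Hne _ _ Hnm); right; left; reflexivity.
    + intros n m Hnm. destruct (Nat.eq_dec n m) as [<-|Hne]; [exact (proj2 (HQ n) Hnm)|].
      refine (Hsep n m _ _ Hne (or_introl eq_refl) _ Hnm); right; left; reflexivity.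
Qed.

Lemma involution_into (A : nat -> Prop) : ~ finite_set A ->
  exists s, involution s /\ forall x, ~ A x -> A (s x).
Proof.
  intros Hinf. destruct (infinite_enumeration A Hinf) as [e [Ie HeA]].
  destruct (involution_extending (fun x => ~ A x) e) as [s [Hs Hse]].
  - intros x y _ _; apply Ie.
  - intros x _ H; exact (H (HeA x)).
  - exists s; split; [exact Hs|]. intros x Hx; rewrite Hse; auto.
Qed.

Lemma injective_escapes (a : nat -> nat) : Injective a ->
  forall l, exists n, ~ In (a n) l.
Proof.
  intros Ia l. apply NNPP; intro H.
  assert (Hi : incl (map a (seq 0 (S (length l)))) l).
  { intros y Hy. apply in_map_iff in Hy. destruct Hy as [n [<- _]].
    apply NNPP; intro Hn; apply H; exists n; exact Hn. }
  apply NoDup_incl_length in Hi.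
  - rewrite length_map, length_seq in Hi; lia.
  - apply Injective_map_NoDup; [exact Ia | apply seq_NoDup].
Qed.

Definition refines (C1 C2 : coarse) : Prop :=
  forall E, C1 E -> exists E', C2 E' /\ forall x y, E x y -> E' x y.

Definition symmetric (G : rel) : Prop := forall x y, G x y -> G y x.

Definition locally_finite (G : rel) : Prop := forall x, finite_set (G x).

Lemma ball_set_finite (G : rel) (A : nat -> Prop) :
  locally_finite G -> finite_set A -> finite_set (ball_set G A).
Proof.
  intros Hloc [lA HA].
  assert (Hlist : forall l, finite_set (ball_set G (fun u => In u l))).
  { intro l; induction l as [|u l IH].
    - exists []; intros y [a [[] _]].
    - destruct IH as [l1 H1]. destruct (Hloc u) as [l2 H2].
      exists (l2 ++ l1); intros y [a [[<-|Ha] Hay]]; apply in_or_app.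
      + left; apply H2; exact Hay.
      + right; apply H1; exists a; split; assumption. }
  destruct (Hlist lA) as [l Hl]. exists l.
  intros y [a [Ha Hay]]; apply Hl; exists a; split; [apply HA|]; assumption.
Qed.

Lemma bounded_refines C1 C2 Y : refines C1 C2 -> bounded_set C1 Y -> bounded_set C2 Y.
Proof.
  intros Href [E [x [HE HY]]]. destruct (Href E HE) as [E' [HE' HEE']].
  exists E', x; split; [exact HE'|]. intros y Hy; apply HEE', HY, Hy.
Qed.

Lemma delta_refines C1 C2 A B : refines C1 C2 -> delta C1 A B -> delta C2 A B.
Proof.
  intros Href [E [HE [HAB HBA]]]. destruct (Href E HE) as [E' [HE' HEE']].
  exists E'; split; [exact HE'|]; split.
  - intros x Hx; destruct (HAB x Hx) as [u [Hu Eu]]; exists u; split; auto.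
  - intros x Hx; destruct (HBA x Hx) as [u [Hu Eu]]; exists u; split; auto.
Qed.

Lemma so_refines C1 C2 f : refines C1 C2 ->
  (forall Y, bounded_set C2 Y -> bounded_set C1 Y) -> so C2 f -> so C1 f.
Proof.
  intros Href Hbdd [Hb Hso]; split; [exact Hb|].
  intros E eps HE Heps. destruct (Href E HE) as [E' [HE' HEE']].
  destruct (Hso E' eps HE' Heps) as [B [HB HBx]].
  exists B; split; [apply Hbdd, HB|].
  intros x Hx. destruct (HBx x Hx) as [d [Hd Hdiam]].
  exists d; split; [exact Hd|]. intros y z Hy Hz; apply Hdiam; apply HEE'; assumption.
Qed.

Lemma calE_involutions (S : list (nat -> nat)) :
  (forall s, In s S -> involution s) -> calE (E_H ((fun x => x) :: S)).
Proof.
  intros HS. exists (E_H ((fun x => x) :: S)); split; [|auto].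
  exists ((fun x => x) :: S); split; [|split; [left; reflexivity | tauto]].
  intros h [<-|Hh]; [apply id_perm | apply involution_perm, HS, Hh].
Qed.

Lemma calE_inside_E_H E : calE E ->
  exists H, (forall h, In h H -> is_perm h) /\ In (fun x => x) H /\
            forall x y, E x y -> E_H H x y.
Proof.
  intros [B [[H [Hp [Hid Hiff]]] Hsub]].
  exists H; split; [exact Hp|split; [exact Hid|]].
  intros x y Exy; apply Hiff, Hsub, Exy.
Qed.

Lemma E_H_orbit H x y : E_H H x y -> In y (map (fun h => h x) H).
Proof. intros [h [Hh ->]]. apply (in_map (fun h => h x) H h Hh). Qed.

Lemma M_omega_of P : admissible_cover P -> M_omega (M_P P).
Proof. intros Ha. exists (M_P P); split; auto. exists P; split; auto; tauto. Qed.

Lemma M_omega_inside_M_P E : M_omega E ->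
  exists P, admissible_cover P /\ forall x y, E x y -> M_P P x y.
Proof.
  intros [B [[P [Ha Hiff]] Hsub]]. exists P; split; [exact Ha|].
  intros x y Exy; apply Hiff, Hsub, Exy.
Qed.

Lemma M_P_symmetric P : symmetric (M_P P).
Proof. intros x y [p [Hp [Hx Hy]]]; exists p; auto. Qed.

Lemma M_P_locally_finite P : admissible_cover P -> locally_finite (M_P P).
Proof. intros [_ Hf] x. apply Hf. Qed.

(* The orbits Hz of a finite set H of permutations form an admissible cover:
   a point x lies only in the orbits of its finitely many H-preimages. *)
Definition orbit_cover (H : list (nat -> nat)) : list nat -> Prop :=
  fun p => exists z, p = map (fun h => h z) H.

Lemma preimages x (H : list (nat -> nat)) : (forall h, In h H -> is_perm h) ->
  exists l, forall z h, In h H -> h z = x -> In z l.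
Proof.
  induction H as [|h H IH]; intros Hp.
  - exists []; intros z h [].
  - destruct IH as [l Hl]; [intros; apply Hp; right; assumption|].
    destruct (Hp h (or_introl eq_refl)) as [Hi Hs]. destruct (Hs x) as [z0 Hz0].
    exists (z0 :: l). intros z g [<-|Hg] Hgz.
    + left; apply Hi; congruence.
    + right; eauto.
Qed.

Lemma orbit_cover_admissible H : (forall h, In h H -> is_perm h) -> In (fun x => x) H ->
  admissible_cover (orbit_cover H).
Proof.
  intros Hp Hid; split.
  - intro x. exists (map (fun h => h x) H); split; [exists x; reflexivity|].
    apply (in_map (fun h => h x) H (fun x => x) Hid).
  - intro x. destruct (preimages x H Hp) as [l Hl].
    exists (flat_map (fun z => map (fun h => h z) H) l).
    intros y [p [[z ->] [Hx Hy]]].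
    apply in_map_iff in Hx. destruct Hx as [h [Hhz Hh]].
    apply in_flat_map. exists z; split; [apply (Hl z h Hh Hhz) | exact Hy].
Qed.

Lemma E_H_inside_orbit_cover H : In (fun x => x) H ->
  forall x y, E_H H x y -> M_P (orbit_cover H) x y.
Proof.
  intros Hid x y Hxy. exists (map (fun h => h x) H); repeat split.
  - exists x; reflexivity.
  - apply (in_map (fun h => h x) H (fun x => x) Hid).
  - apply E_H_orbit, Hxy.
Qed.

Lemma calE_refines_M_omega : refines calE M_omega.
Proof.
  intros E HE. destruct (calE_inside_E_H E HE) as [H [Hp [Hid HEH]]].
  exists (M_P (orbit_cover H)); split.
  - apply M_omega_of, orbit_cover_admissible; assumption.
  - intros x y Exy; apply E_H_inside_orbit_cover, HEH; assumption.
Qed.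

Lemma calE_bounded_finite Y : bounded_set calE Y -> finite_set Y.
Proof.
  intros [E [x [HE HY]]]. destruct (calE_inside_E_H E HE) as [H [_ [_ HEH]]].
  exists (map (fun h => h x) H). intros y Hy; apply E_H_orbit, HEH, HY, Hy.
Qed.

Lemma M_omega_bounded_finite Y : bounded_set M_omega Y -> finite_set Y.
Proof.
  intros [E [x [HE HY]]]. destruct (M_omega_inside_M_P E HE) as [P [Ha HEP]].
  destruct (M_P_locally_finite P Ha x) as [l Hl].
  exists l. intros y Hy; apply Hl, HEP, HY, Hy.
Qed.

(* A finite set lies in the ball around 0 of the transpositions (0 y). *)
Lemma finite_calE_bounded Y : finite_set Y -> bounded_set calE Y.
Proof.
  intros [l Hl]. exists (E_H ((fun x => x) :: map (swap 0) l)), 0. split.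
  - apply calE_involutions. intros s Hs. apply in_map_iff in Hs.
    destruct Hs as [y [<- _]]; apply swap_involution.
  - intros y Hy. exists (swap 0 y); split; [right; apply in_map, Hl, Hy|].
    rewrite swap_l; reflexivity.
Qed.

Lemma finite_M_omega_bounded Y : finite_set Y -> bounded_set M_omega Y.
Proof.
  intros Hf. apply (bounded_refines calE); [exact calE_refines_M_omega|].
  apply finite_calE_bounded, Hf.
Qed.

(* The cover of omega by the intervals [n, 2n] is admissible, but its ball
   around n has n + 1 points; balls of E_H have at most |H| points. *)
Definition interval_cover : list nat -> Prop := fun p => exists n, p = seq n (S n).

Lemma interval_cover_admissible : admissible_cover interval_cover.
Proof.
  split.
  - intro x; exists (seq x (S x)); split; [exists x; reflexivity | apply in_seq; lia].
  - intro x; exists (seq 0 (S (2 * x))). intros y [p [[n ->] [Hx Hy]]].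
    apply in_seq in Hx; apply in_seq in Hy; apply in_seq; lia.
Qed.

Lemma calE_neq_M_omega : ~ (forall E : rel, calE E <-> M_omega E).
Proof.
  intro Heq.
  pose proof (proj2 (Heq _) (M_omega_of _ interval_cover_admissible)) as HE.
  destruct (calE_inside_E_H _ HE) as [H [_ [_ HEH]]].
  set (n := length H).
  assert (Hball : incl (seq n (S n)) (map (fun h => h n) H)).
  { intros y Hy. apply E_H_orbit, HEH.
    exists (seq n (S n)); split; [exists n; reflexivity|]; split; [apply in_seq; lia|exact Hy]. }
  apply NoDup_incl_length in Hball; [|apply seq_NoDup].
  rewrite length_seq, length_map in Hball. unfold n in Hball; lia.
Qed.

(* Finite sets which are nonempty together are calE-close, via the
   transpositions (a b) with a in A and b in B. *)
Lemma delta_calE_finite A B : finite_set A -> finite_set B ->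
  (forall a, A a -> exists b, B b) -> (forall b, B b -> exists a, A a) -> delta calE A B.
Proof.
  intros [lA HA] [lB HB] HAB HBA.
  exists (E_H ((fun x => x) :: flat_map (fun a => map (swap a) lB) lA)); split.
  - apply calE_involutions. intros s Hs. apply in_flat_map in Hs.
    destruct Hs as [a [_ Hs]]. apply in_map_iff in Hs.
    destruct Hs as [b [<- _]]; apply swap_involution.
  - assert (Hswap : forall a b, A a -> B b ->
              In (swap a b) (flat_map (fun a => map (swap a) lB) lA)).
    { intros a b Ha Hb. apply in_flat_map; exists a; split; [apply HA, Ha|].
      apply in_map, HB, Hb. }
    split.
    + intros a Ha. destruct (HAB a Ha) as [b Hb]. exists b; split; [exact Hb|].
      exists (swap a b); split; [right; apply Hswap; assumption|].
      rewrite swap_r; reflexivity.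
    + intros b Hb. destruct (HBA b Hb) as [a Ha]. exists a; split; [exact Ha|].
      exists (swap a b); split; [right; apply Hswap; assumption|].
      rewrite swap_l; reflexivity.
Qed.

(* Two infinite sets are calE-close, via two involutions moving the
   complement of each set into it. *)
Lemma delta_calE_infinite A B : ~ finite_set A -> ~ finite_set B -> delta calE A B.
Proof.
  intros HA HB.
  destruct (involution_into A HA) as [sA [HsA HsAin]].
  destruct (involution_into B HB) as [sB [HsB HsBin]].
  exists (E_H [fun x => x; sA; sB]); split.
  - apply calE_involutions. intros s [<-|[<-|[]]]; assumption.
  - split.
    + intros a Ha. destruct (classic (B a)) as [Hb|Hb].
      * exists a; split; [exact Hb|]. exists (fun x => x); split; [left|]; reflexivity.
      * exists (sB a); split; [apply HsBin, Hb|].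
        exists sB; split; [right; right; left; reflexivity | symmetry; apply HsB].
    + intros b Hb. destruct (classic (A b)) as [Ha|Ha].
      * exists b; split; [exact Ha|]. exists (fun x => x); split; [left|]; reflexivity.
      * exists (sA b); split; [apply HsAin, Ha|].
        exists sA; split; [right; left; reflexivity | symmetry; apply HsA].
Qed.

(* M_omega-close sets are finite together, hence calE-close. *)
Lemma delta_M_omega_calE A B : delta M_omega A B -> delta calE A B.
Proof.
  intros [E [HE [HAB HBA]]]. destruct (M_omega_inside_M_P E HE) as [P [HP HEP]].
  assert (HAB' : subset A (ball_set (M_P P) B)).
  { intros a Ha; destruct (HAB a Ha) as [b [Hb Eb]]; exists b; split; auto. }
  assert (HBA' : subset B (ball_set (M_P P) A)).
  { intros b Hb; destruct (HBA b Hb) as [a [Ha Ea]]; exists a; split; auto. }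
  pose proof (M_P_locally_finite P HP) as Hloc.
  destruct (classic (finite_set A)) as [HA|HA].
  - assert (HB : finite_set B).
    { destruct (ball_set_finite _ A Hloc HA) as [l Hl]; exists l; auto. }
    apply delta_calE_finite; try assumption.
    + intros a Ha; destruct (HAB a Ha) as [b [Hb _]]; exists b; exact Hb.
    + intros b Hb; destruct (HBA b Hb) as [a [Ha _]]; exists a; exact Ha.
  - apply delta_calE_infinite; [exact HA|].
    intro HB; apply HA. destruct (ball_set_finite _ B Hloc HB) as [l Hl]; exists l; auto.
Qed.

(* Otherwise there are infinitely many disjoint bad edges
   (a_n, b_n); the involution exchanging them is a calE entourage whose
   balls {a_n, b_n} have f-diameter > c outside every bounded set. *)
Lemma slow_oscillation_along_graph (G : rel) (f : nat -> R) (c : R) :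
  symmetric G -> locally_finite G -> slowly_oscillating calE f -> (0 < c)%R ->
  exists l, forall x w, ~ In x l -> G x w -> (Rabs (f x - f w) <= c)%R.
Proof.
  intros Hsym Hloc Hso Hc. apply NNPP; intro Hno.
  assert (Hbad : forall L, exists x w,
             (c < Rabs (f x - f w))%R /\ x <> w /\ ~ In x L /\ ~ In w L).
  { intro L.
    destruct (ball_set_finite G (fun u => In u L) Hloc (ex_intro _ L (fun _ h => h)))
      as [lN HN].
    apply NNPP; intro Hn; apply Hno; exists (L ++ lN). intros x w Hx Hxw.
    apply Rnot_lt_le; intro Hlt; apply Hn; exists x, w; repeat split.
    - exact Hlt.
    - intros ->. rewrite Rminus_diag, Rabs_R0 in Hlt; lra.
    - intro HxL; apply Hx, in_or_app; left; exact HxL.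
    - intro HwL; apply Hx, in_or_app; right; apply HN.
      exists w; split; [exact HwL | apply Hsym, Hxw]. }
  destruct (fresh_edges _ Hbad) as [a [b [Ia [Ib [Iab Hab]]]]].
  destruct (pairing_involution a b Ia Ib Iab) as [s [Hs Hsab]].
  assert (HE : calE (E_H [fun x => x; s])).
  { apply calE_involutions. intros s' [<-|[]]; exact Hs. }
  destruct (Hso _ c HE Hc) as [B [HB Hdiam]].
  destruct (calE_bounded_finite B HB) as [lB HlB].
  destruct (injective_escapes a Ia lB) as [n Hn].
  destruct (Hdiam (a n) (fun h => Hn (HlB _ h))) as [d [Hd Hle]].
  assert (Ha : ball (E_H [fun x => x; s]) (a n) (a n)).
  { exists (fun x => x); split; [left|]; reflexivity. }
  assert (Hb : ball (E_H [fun x => x; s]) (a n) (b n)).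
  { exists s; split; [right; left; reflexivity | symmetry; apply Hsab]. }
  specialize (Hle _ _ Ha Hb). specialize (Hab n). lra.
Qed.

Lemma so_calE_M_omega f : so calE f -> so M_omega f.
Proof.
  intros [Hb Hso]; split; [exact Hb|].
  intros E eps HE Heps. destruct (M_omega_inside_M_P E HE) as [P [Ha HEP]].
  destruct (slow_oscillation_along_graph (M_P P) f (eps / 3) (M_P_symmetric P)
              (M_P_locally_finite P Ha) Hso) as [l Hl]; [lra|].
  exists (fun x => In x l); split; [apply finite_M_omega_bounded; exists l; auto|].
  intros x Hx; exists (2 * (eps / 3))%R; split; [lra|].
  intros y z Hy Hz.
  pose proof (Hl x y Hx (HEP _ _ Hy)) as Hxy. pose proof (Hl x z Hx (HEP _ _ Hz)) as Hxz.
  replace (f y - f z)%R with ((f y - f x) + (f x - f z))%R by ring.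
  eapply Rle_trans; [apply Rabs_triang|]. rewrite Rabs_minus_sym. lra.
Qed.

Theorem mainTheorem11 :
  (forall f : nat -> R, so calE f <-> so M_omega f) /\
  (forall A B : nat -> Prop, delta calE A B <-> delta M_omega A B) /\
  ~ (forall E : rel, calE E <-> M_omega E) /\
  (forall Y : nat -> Prop, bounded_set calE Y <-> finite_set Y) /\
  (forall Y : nat -> Prop, bounded_set M_omega Y <-> finite_set Y).
Proof.
  assert (Hbdd : forall Y, bounded_set M_omega Y -> bounded_set calE Y).
  { intros Y HY; apply finite_calE_bounded, M_omega_bounded_finite, HY. }
  split; [|split; [|split; [exact calE_neq_M_omega|split]]].
  - intro f; split; [apply so_calE_M_omega|].
    apply so_refines; [exact calE_refines_M_omega | exact Hbdd].
  - intros A B; split; [apply delta_refines, calE_refines_M_omega | apply delta_M_omega_calE].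
  - intro Y; split; [apply calE_bounded_finite | apply finite_calE_bounded].
  - intro Y; split; [apply M_omega_bounded_finite | apply finite_M_omega_bounded].
Qed.
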